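(* For every integer $p\ge 1$ and every integer $n\ge p+2$, $$\sigma(K_{p,1,1},n)\;\ge\; 2\left\lfloor \frac{(p+1)(n-1)+2}{2}\right\rfloor .$$
   Context: A finite sequence $S=(d_1,\dots,d_n)$ of non-negative integers is graphical if it is the degree sequence of some simple graph on $n$ vertices (a realization of $S$). Write $\sigma(S)=d_1+\dots+d_n$. For a graph $H$, a graphical sequence $S$ is potentially $H$-graphical if some realization of $S$ contains $H$ as a subgraph. $K_{p,1,1}$ denotes the complete 3-partite graph with parts of sizes $p,1,1$. $\sigma(H,n)$ denotes the minimum even integer $l$ such that every $n$-term graphical sequence $S$ with $\sigma(S)\ge l$ is potentially $H$-graphical. $\lfloor x\rfloor$ is the largest integer $\le x$. *)

From mathcomp Require Import all_boot.
Set Implicit Arguments. Unset Strict Implicit. Unset Printing Implicit Defensive.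

Definition simple_graph (V : finType) (e : rel V) : Prop :=
  irreflexive e /\ symmetric e.

Definition deg (V : finType) (e : rel V) (v : V) : nat := #|[set w | e v w]|.

Definition seq_sum (n : nat) (S : 'I_n -> nat) : nat := \sum_(i < n) S i.

Definition realization (n : nat) (S : 'I_n -> nat) (e : rel 'I_n) : Prop :=
  simple_graph e /\ forall i, deg e i = S i.

Definition graphical (n : nat) (S : 'I_n -> nat) : Prop :=
  exists e : rel 'I_n, realization S e.

Definition contains_subgraph (V W : finType) (eG : rel V) (eH : rel W) : Prop :=
  exists f : W -> V, injective f /\ forall u v, eH u v -> eG (f u) (f v).

Definition potentially_graphical (W : finType) (eH : rel W)
    (n : nat) (S : 'I_n -> nat) : Prop :=
  exists e : rel 'I_n, realization S e /\ contains_subgraph e eH.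

(* K_{p,1,1} on vertices 'I_(p+2): parts {0..p-1}, {p}, {p+1}. *)
Definition K_p11 (p : nat) : rel 'I_(p + 2) :=
  fun i j => (i != j) && ~~ ((i < p) && (j < p)).

(* l is admissible for sigma(H,n): l is even and every n-term graphical
   sequence with sum >= l is potentially H-graphical.
   sigma(H,n) is the minimum admissible l. *)
Definition sigma_admissible (W : finType) (eH : rel W) (n l : nat) : Prop :=
  ~~ odd l /\
  forall S : 'I_n -> nat, graphical S -> l <= seq_sum S ->
    potentially_graphical eH S.
Arguments K_p11 p : clear implicits.

From mathcomp Require Import all_boot ssralg finalg zmodp.
From mathcomp Require Import zify.

Set Implicit Arguments.
Unset Strict Implicit.
Unset Printing Implicit Defensive.

Import GRing.Theory.

(* The two vertices of the singleton parts of K_{p,1,1} are adjacent to all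
   p + 1 other vertices, so a realization containing K_{p,1,1} has two
   vertices of degree greater than p.  With M = n - 1, take a graph H on M
   vertices of maximum degree d = p - 1 whose degree sum is d * M rounded
   down to an even number: the circulant graph joining vertices at circular
   distance at most d/2, plus, for odd d, the matching of antipodal vertices,
   which misses at most one vertex.  Joining a new vertex to all of H yields
   a graphical sequence with a single entry above p and sum at least
   2 * ((p + 1) * M / 2), which therefore is not potentially
   K_{p,1,1}-graphical. *)

Lemma K_p11_hubs (V : finType) (e : rel V) (p : nat) :
  contains_subgraph e (K_p11 p) ->
  exists u v, [/\ u != v, p < deg e u & p < deg e v].
Proof.
case=> f [f_inj f_hom].
have hub_deg (w : 'I_(p + 2)) : p <= w -> p < deg e (f w).
  move=> p_le_w; have sub : f @: [set~ w] \subset [set y | e (f w) y].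
    apply/subsetP => y /imsetP [u]; rewrite !inE => u_neq_w ->.
    by apply: f_hom; rewrite /K_p11 eq_sym u_neq_w /= ltnNge p_le_w.
  by have := subset_leq_card sub; rewrite card_imset // cardsC1 card_ord addn2.
have lt_p_p2 : p < p + 2 by rewrite addn2.
have lt_p1_p2 : p.+1 < p + 2 by rewrite addn2.
exists (f (Ordinal lt_p_p2)), (f (Ordinal lt_p1_p2)); split; try exact: hub_deg.
by rewrite (inj_eq f_inj) -(inj_eq val_inj) /= ltn_eqF.
Qed.

Lemma not_potentially_K_p11 (n p : nat) (S : 'I_n -> nat) (z : 'I_n) :
  (forall a, a != z -> S a <= p) -> ~ potentially_graphical (K_p11 p) S.
Proof.
move=> S_le [e [[_ deg_e] /K_p11_hubs [u [v [u_neq_v]]]]].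
rewrite !deg_e => hub_u hub_v.
have [eq_uz | /S_le] := eqVneq u z; last by rewrite leqNgt hub_u.
have [eq_vz | /S_le] := eqVneq v z; last by rewrite leqNgt hub_v.
by rewrite eq_uz eq_vz eqxx in u_neq_v.
Qed.

Section Cone.

Variables (m : nat) (e : rel 'I_m).

Definition cone : rel 'I_m.+1 := fun a b =>
  match unlift ord0 a, unlift ord0 b with
  | Some i, Some j => e i j
  | None, None => false
  | _, _ => true
  end.

Lemma cone_lift i j : cone (lift ord0 i) (lift ord0 j) = e i j.
Proof. by rewrite /cone !liftK. Qed.

Lemma cone0 a : cone ord0 a = (a != ord0).
Proof.
by rewrite /cone unlift_none; case: unliftP => [i ->|->]; rewrite ?neq_lift ?eqxx.
Qed.

Lemma cone_simple : simple_graph e -> simple_graph cone.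
Proof.
case=> e_irr e_sym; split=> [a | a b]; rewrite /cone.
  by case: (unlift ord0 a) => // i; apply: e_irr.
by case: (unlift ord0 a) => [i|]; case: (unlift ord0 b) => [j|] //; apply: e_sym.
Qed.

Lemma deg_cone0 : deg cone ord0 = m.
Proof.
rewrite /deg (_ : [set b | cone ord0 b] = [set~ ord0]) ?cardsC1 ?card_ord //.
by apply/setP => b; rewrite !inE cone0.
Qed.

Lemma deg_cone_lift i : deg cone (lift ord0 i) = (deg e i).+1.
Proof.
rewrite /deg; have -> : [set b | cone (lift ord0 i) b] = ord0 |: lift ord0 @: [set j | e i j].
  apply/setP => b; rewrite !inE; case: (unliftP ord0 b) => [j -> | ->].
    rewrite cone_lift eq_sym (negbTE (neq_lift _ _)) mem_imset ?inE //.
    exact: lift_inj.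
  by rewrite /cone liftK unlift_none; apply/esym/orP; left.
have ord0_notin : (ord0 : 'I_m.+1) \notin lift ord0 @: [set j | e i j].
  by apply/imsetP => -[j _ /(congr1 val)].
by rewrite (cardsU1 (ord0 : 'I_m.+1)) ord0_notin card_imset //; exact: lift_inj.
Qed.

Lemma sum_deg_cone : \sum_(a < m.+1) deg cone a = m + m + \sum_(i < m) deg e i.
Proof.
rewrite big_ord_recl deg_cone0 -addnA; congr (_ + _).
under eq_bigr => i _ do rewrite deg_cone_lift -add1n.
by rewrite big_split sum_nat_const card_ord muln1.
Qed.

End Cone.

Section Cayley.

Variables (G : finZmodType) (D : {set G}).

Definition cayley : rel G := fun x y => (y - x)%R \in D.

Lemma cayley_simple :
  (0%R \notin D) -> (forall x, (- x)%R \in D = (x \in D)) -> simple_graph cayley.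
Proof.
move=> D0 DN; split=> [x | x y]; first by rewrite /cayley subrr (negbTE D0).
by rewrite /cayley -opprB DN.
Qed.

Lemma deg_cayley x : deg cayley x = #|D|.
Proof. exact: card_preimset (addIr (- x)%R). Qed.

End Cayley.

Section Matching.

Variables (V : finType) (mu : V -> V).

Definition matching : rel V := fun x y => (y == mu x) && (x != y).

Lemma matching_simple : involutive mu -> simple_graph matching.
Proof.
move=> muK; split=> [x | x y]; first by rewrite /matching eqxx andbF.
by rewrite /matching (eq_sym x y); congr (_ && _); apply/eqP/eqP => ->; rewrite muK.
Qed.

Lemma deg_matching x : deg matching x = (mu x != x).
Proof.
rewrite /deg; have [fix_x | move_x] := eqVneq (mu x) x.
  rewrite (_ : [set y | matching x y] = set0) ?cards0 //.
  by apply/setP => y; rewrite !inE /matching fix_x; case: eqVneq => // ->; rewrite eqxx.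
rewrite /= -(cards1 (mu x)); apply: eq_card => y; rewrite !inE /matching.
by case: eqVneq => // ->; rewrite eq_sym.
Qed.

End Matching.

Lemma simple_relU (V : finType) (e1 e2 : rel V) :
  simple_graph e1 -> simple_graph e2 -> simple_graph (relU e1 e2).
Proof.
move=> [irr1 sym1] [irr2 sym2]; split=> [x | x y] /=; first by rewrite irr1 irr2.
by rewrite sym1 sym2.
Qed.

Lemma deg_relU (V : finType) (e1 e2 : rel V) x :
  (forall y, e1 x y -> ~~ e2 x y) -> deg (relU e1 e2) x = deg e1 x + deg e2 x.
Proof.
move=> disj; rewrite /deg -cardsUI.
have -> : [set y | e1 x y] :&: [set y | e2 x y] = set0.
  by apply/setP => y; rewrite !inE; case e1xy: (e1 x y); rewrite ?(negbTE (disj _ e1xy)).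
by rewrite cards0 addn0; apply: eq_card => y; rewrite !inE.
Qed.

Lemma sum_ord_lt n b : \sum_(i < n) (i < b : nat) = minn b n.
Proof.
elim: n => [|n IHn]; first by rewrite big_ord0 minn0.
by rewrite big_ord_recr /= IHn; case: ltnP => h /=; lia.
Qed.

Section Circulant.

Variables (m k : nat).
Local Notation M := m.+1.

Lemma val_oppZp (x : 'I_M) : 0 < x -> val (- x)%R = M - x.
Proof. by move=> x_gt0; rewrite /= modn_small //; have := ltn_ord x; lia. Qed.

Lemma val_subZp (x y : 'I_M) : val (y - x)%R = if x <= y then y - x else y + M - x.
Proof.
rewrite /= modnDmr; case: leqP => [le_xy | lt_yx].
  by rewrite (_ : y + (M - x) = y - x + M) ?modnDr ?modn_small //; have := ltn_ord y; lia.
by rewrite modn_small; have := ltn_ord x; lia.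
Qed.

Local Notation h := (M %/ 2).

Definition antipode (x : 'I_M) : 'I_M :=
  inord (if x < h then x + h else if x < h + h then x - h else x).

Lemma val_antipode x :
  nat_of_ord (antipode x) = if x < h then x + h else if x < h + h then x - h else x.
Proof. by rewrite inordK //; have := ltn_ord x; (repeat case: ifP => ?); lia. Qed.

Lemma antipodeK : involutive antipode.
Proof.
move=> x; apply: val_inj; move: (val_antipode x) (val_antipode (antipode x)) => /=.
by have := ltn_ord x; (repeat case: ifP => ?); lia.
Qed.

Lemma antipode_moved x : (antipode x != x) = (x < h + h).
Proof. by rewrite -(inj_eq val_inj) /= val_antipode; (repeat case: ifP => ?); lia. Qed.

Lemma sum_antipode_moved : \sum_(x < M) (antipode x != x : nat) = h + h.
Proof.
under eq_bigr => x _ do rewrite antipode_moved.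
by rewrite sum_ord_lt; lia.
Qed.

Definition short_steps : {set 'I_M} := [set x : 'I_M | 0 < x <= k].

Definition circulant_steps : {set 'I_M} :=
  short_steps :|: [set x | (- x)%R \in short_steps].

Lemma mem_circulant_steps x :
  (x \in circulant_steps) = (0 < x <= k) || (0 < x) && (M - k <= x).
Proof.
rewrite !inE; congr (_ || _); have [x0|x_gt0] := posnP x.
  by rewrite (_ : x = 0%R) ?oppr0 //; apply: val_inj.
by rewrite val_oppZp //=; have := ltn_ord x; lia.
Qed.

Lemma circulant_stepsN x : ((- x)%R \in circulant_steps) = (x \in circulant_steps).
Proof.
rewrite !mem_circulant_steps; have [x0|x_gt0] := posnP x.
  by rewrite (_ : x = 0%R) ?oppr0 //; apply: val_inj.
by rewrite val_oppZp //=; have := ltn_ord x; lia.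
Qed.

Lemma antipode_not_circulant x :
  k + k < m -> antipode x != x -> (antipode x - x)%R \notin circulant_steps.
Proof.
move=> kk_lt_m; rewrite antipode_moved mem_circulant_steps val_subZp.
by move: (val_antipode x); have := ltn_ord x; (repeat case: ifP => ?); lia.
Qed.

Hypothesis kk_lt_M : k + k < M.

Lemma card_short_steps : #|short_steps| = k.
Proof.
have -> : short_steps = [set inord i.+1 | i : 'I_k].
  apply/setP => x; rewrite inE; apply/idP/imsetP => [x_in | [i _ ->]].
    have lt_pred : x.-1 < k by lia.
    by exists (Ordinal lt_pred) => //; apply/val_inj; rewrite /= inordK; lia.
  by rewrite inordK; have := ltn_ord i; lia.
have succ_lt_M (i : 'I_k) : i.+1 < M by have := ltn_ord i; lia.
rewrite card_imset ?card_ord // => i j /(congr1 val).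
by rewrite /= !inordK ?succ_lt_M // => -[/val_inj].
Qed.

Lemma card_circulant_steps : #|circulant_steps| = k + k.
Proof.
rewrite cardsU (card_preimset _ oppr_inj) card_short_steps.
rewrite (_ : _ :&: _ = set0) ?cards0 ?subn0 //; apply/setP => x; rewrite !inE.
have [x0|x_gt0] := posnP x; first by rewrite x0.
by rewrite val_oppZp //; have := ltn_ord x; lia.
Qed.

End Circulant.

Lemma near_regular_graph m d : d <= m ->
  exists e : rel 'I_m.+1, [/\ simple_graph e, forall x, deg e x <= d
    & 2 * (d * m.+1 %/ 2) <= \sum_(x < m.+1) deg e x].
Proof.
move=> d_le_m; set k := d./2; set c := odd d.
have d_eq : d = k + k + c by rewrite /k /c -{1}(odd_double_half d) -addnn; lia.
pose mu := if c then @antipode m else id.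
have muK : involutive mu by rewrite /mu; case: (c) => //; exact: antipodeK.
pose e := relU (cayley (circulant_steps m k)) (matching mu).
have kk_lt_M : k + k < m.+1 by lia.
have deg_e x : deg e x = k + k + (mu x != x).
  rewrite deg_relU ?deg_cayley ?card_circulant_steps ?deg_matching // => y.
  apply: contraTN => /andP [/eqP ->]; rewrite /cayley /mu.
  case: (c) d_eq => d_eq x_moved; last by rewrite eqxx in x_moved.
  by apply: antipode_not_circulant; [lia | rewrite eq_sym].
exists e; split.
- apply: simple_relU (matching_simple muK); apply: cayley_simple => [|x].
    by rewrite mem_circulant_steps.
  exact: circulant_stepsN.
- by move=> x; rewrite deg_e d_eq leq_add2l /mu; case: (c) => /=; rewrite ?leq_b1 ?eqxx.
- rewrite (eq_bigr (fun x => k + k + (mu x != x))) => [|x _]; last exact: deg_e.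
  rewrite big_split sum_nat_const card_ord /= d_eq /mu.
  case: (c); first by rewrite sum_antipode_moved; nia.
  by rewrite big1 => [|x _]; rewrite ?eqxx //; nia.
Qed.

Theorem theorem1 (p n : nat) (hp : 1 <= p) (hn : p + 2 <= n) :
  forall l : nat, sigma_admissible (K_p11 p) n l ->
    2 * (((p + 1) * (n - 1) + 2) %/ 2) <= l.
Proof.
move=> l [l_even admissible]; rewrite leqNgt; apply/negP => l_small.
have [m n_eq] : exists m, n = m.+2 by exists (n - 2); lia.
subst n.
have [e [e_simple e_deg e_sum]] := @near_regular_graph m (p - 1) (ltac:(lia)).
have S_graphical : graphical (deg (cone e)).
  by exists (cone e); split; first exact: cone_simple.
(* Since l is even, [l_small] says l <= 2 * ((p + 1) * (m + 1) / 2). *)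
have : l <= seq_sum (deg (cone e)).
  rewrite /seq_sum sum_deg_cone; move: l_small e_sum; rewrite -[m.+2 - 1]/m.+1.
  have -> : (p + 1) * m.+1 = (p - 1) * m.+1 + 2 * m.+1 by rewrite -mulnDl; congr (_ * _); lia.
  lia.
move/(admissible _ S_graphical); apply: (not_potentially_K_p11 (z := ord0)) => a a_ne0.
case: (unliftP ord0 a) a_ne0 => [i -> _ | -> ]; last by rewrite eqxx.
by rewrite deg_cone_lift; have := e_deg i; lia.
Qed.
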